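(* The smallest order $n$ for which there exists a pair of unbiased weighing matrices of order $n$ and weight $9$ is $n=13$.
   Context: A weighing matrix of order $n$ and weight $k$ is an $n\times n$ matrix $W$ with entries in $\{1,-1,0\}$ such that $WW^T=kI_n$. Two weighing matrices $W_1,W_2$ of order $n$ and weight $k$ are unbiased if $\frac{1}{\sqrt{k}}W_1W_2^T$ is also a weighing matrix of order $n$ and weight $k$. *)

From mathcomp Require Import all_boot all_order all_algebra all_field.
Set Implicit Arguments. Unset Strict Implicit. Unset Printing Implicit Defensive.
Import Order.TTheory GRing.Theory Num.Theory.
Local Open Scope ring_scope.

Definition is_weighing (R : nzRingType) (n k : nat) (W : 'M[R]_n) : Prop :=
  (forall i j, W i j = 0 \/ W i j = 1 \/ W i j = -1) /\
  W *m W^T = (k%:R)%:M.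

Definition weighing (n k : nat) (W : 'M[int]_n) : Prop := is_weighing k W.

Definition unbiased (n k : nat) (W1 W2 : 'M[int]_n) : Prop :=
  weighing k W1 /\ weighing k W2 /\
  is_weighing k ((sqrtC (k%:R : algC))^-1 *: map_mx (fun z : int => z%:~R : algC) (W1 *m W2^T)).

From mathcomp Require Import all_boot all_order all_algebra all_field.
From mathcomp Require Import zify ring.
Set Implicit Arguments. Unset Strict Implicit. Unset Printing Implicit Defensive.
Import Order.TTheory GRing.Theory Num.Theory.
Local Open Scope ring_scope.

(* For a ternary integer matrix A let P(A) be the 0/1 matrix of its zero
   entries and S(A) the matrix of squared entries. If A, B are weighing
   matrices of order n and weight k then P(A) P(B)^T = (n - 2k) + S(A) S(B)^T
   entrywise, S(A) S(B)^T = A B^T (mod 2), and P(A) P(B)^T is nonnegative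
   with row sums (n - k)^2.
   - n odd, A = B: the off-diagonal entries of P(A) P(A)^T are odd, so
     n - 1 <= (n - k)^2; this excludes n = 9 and n = 11 for k = 9.
   - n even, A B^T = 3 C: P(A) P(B)^T dominates S(C), whose row sums are k,
     so k <= (n - k)^2; this excludes n = 10, and for n = t^2 + t, k = t^2
     (here t = 3) forces P(A) P(B)^T = S(C). In this tight case
     F = P(A)^T P(A) and G = P(B)^T P(B) satisfy F G = t (t - 1) + F
     entrywise; a counting argument gives j <> i with F i j = G i j = 0, and
     then (F G) i j = 0 (mod 4), whereas t (t - 1) = 2 (mod 4) when
     t = 3 (mod 4).
   Orders below 9 are impossible, and order 13 is realised by circulants. *)

Definition ternary_mx (R : nzRingType) p q (A : 'M[R]_(p, q)) : Prop :=
  forall i j, A i j = 0 \/ A i j = 1 \/ A i j = -1.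

Section IntegerImage.
Variables (R : numDomainType) (p q : nat).
Local Notation intr_mx := (map_mx (fun z : int => z%:~R : R)).

Lemma intr_mx_inj : injective (intr_mx : 'M[int]_(p, q) -> 'M[R]_(p, q)).
Proof.
move=> A B /matrixP eqAB; apply/matrixP => i j.
by have /[!mxE] /intr_inj := eqAB i j.
Qed.

Lemma ternary_intr_mx (A : 'M[int]_(p, q)) : ternary_mx (intr_mx A) <-> ternary_mx A.
Proof.
have intr_ternary (z : int) : z%:~R = 0 :> R \/ z%:~R = 1 :> R \/ z%:~R = -1 :> R <->
                               z = 0 \/ z = 1 \/ z = -1.
  rewrite -[0 : R]/((0 : int)%:~R) -[1 : R]/((1 : int)%:~R) -[-1 : R]/((-1 : int)%:~R).
  by split=> [[/intr_inj|[/intr_inj|/intr_inj]]|[|[]]] ->; auto.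
by split=> tA i j; have /[!mxE] /intr_ternary := tA i j.
Qed.

Lemma ternary_mx_intr_surj (E : 'M[R]_(p, q)) : ternary_mx E -> exists A, E = intr_mx A.
Proof.
move=> tE; exists (\matrix_(i, j) (if E i j == 1 then 1 else if E i j == -1 then -1 else 0)).
apply/matrixP => i j; rewrite !mxE.
have one_neqN1 : (1 : R) != -1 by rewrite -subr_eq0 opprK -mulr2n pnatr_eq0.
case: (tE i j) => [->|[->|->]]; rewrite ?eqxx ?(negPf one_neqN1) //.
- by rewrite eq_sym oner_eq0 eq_sym oppr_eq0 oner_eq0.
- by rewrite eq_sym (negPf one_neqN1).
Qed.

End IntegerImage.

Lemma is_weighing_tr (F : fieldType) n k (W : 'M[F]_n) :
  k%:R != 0 :> F -> is_weighing k W -> is_weighing k W^T.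
Proof.
move=> k_neq0 [tW WWt]; split=> [i j|]; first by rewrite mxE.
have : W *m (k%:R^-1 *: W^T) = 1%:M by rewrite -scalemxAr WWt scale_scalar_mx mulVf.
move/mulmx1C; rewrite trmxK -scalemxAl => /(congr1 ( *:%R k%:R)).
by rewrite scalerA mulfV // scale1r scale_scalar_mx mulr1.
Qed.

Section IntegerWeighing.
Variables (n k : nat).
Implicit Types W : 'M[int]_n.

Lemma is_weighing_intr_mx (R : numDomainType) W :
  is_weighing k (map_mx (fun z : int => z%:~R : R) W) <-> weighing k W.
Proof.
have map_k : map_mx (fun z : int => z%:~R : R) (k%:R%:M) = (k%:R)%:M :> 'M_n.
  by rewrite map_scalar_mx /= rmorph_nat.
rewrite /weighing /is_weighing map_trmx -map_mxM -map_k.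
split=> -[tW WWt]; split.
- exact/ternary_intr_mx.
- exact: intr_mx_inj WWt.
- exact/(ternary_intr_mx R).
- by rewrite WWt.
Qed.

Lemma weighing_tr W : (0 < k)%N -> weighing k W -> weighing k W^T.
Proof.
move=> k_gt0 /(is_weighing_intr_mx rat) /is_weighing_tr.
by rewrite pnatr_eq0 -lt0n k_gt0 map_trmx => /(_ isT) /is_weighing_intr_mx.
Qed.

End IntegerWeighing.

Lemma unbiasedP n (m : nat) (W1 W2 : 'M[int]_n) : (0 < m)%N ->
  unbiased (m ^ 2) W1 W2 <->
  [/\ weighing (m ^ 2) W1, weighing (m ^ 2) W2 &
      exists2 C, weighing (m ^ 2) C & W1 *m W2^T = m%:R *: C].
Proof.
move=> m_gt0; have m_neq0 : m%:R != 0 :> algC by rewrite pnatr_eq0 -lt0n.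
rewrite /unbiased natrX sqrCK ?ler0n //.
set intrC := map_mx (fun z : int => z%:~R : algC).
have intrCZ (C : 'M[int]_n) : intrC (m%:R *: C) = m%:R *: intrC C.
  by apply/matrixP => i j; rewrite !mxE intrM rmorph_nat.
split=> [[w1 [w2 wE]] | [w1 w2 [C wC ->]]]; last first.
  by do 2!split=> //; rewrite intrCZ scalerA mulVf // scale1r; apply/is_weighing_intr_mx.
have [C EC] := ternary_mx_intr_surj wE.1.
have {}EC : m%:R^-1 *: intrC (W1 *m W2^T) = intrC C := EC.
split=> //; exists C; first by apply/(is_weighing_intr_mx _ algC); rewrite EC in wE.
apply: (@intr_mx_inj algC); change (intrC (W1 *m W2^T) = intrC (m%:R *: C)).
by rewrite intrCZ -EC scalerA mulfV // scale1r.
Qed.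

Lemma dvdz2_sqr_sub (z : int) : (2 %| z ^+ 2 - z)%Z.
Proof.
have [q [-> | ->]] : exists q, z = 2 * q \/ z = 2 * q + 1 by exists (z %/ 2)%Z; lia.
- by apply/dvdzP; exists (q * (2 * q - 1)); ring.
- by apply/dvdzP; exists (q * (2 * q + 1)); ring.
Qed.

Lemma ternary_sqr_le_dvdz2 (c g : int) : c = 0 \/ c = 1 \/ c = -1 ->
  0 <= g -> (2 %| g - c)%Z -> c ^+ 2 <= g.
Proof. by case=> [|[]] ->; lia. Qed.

Definition sqr_mx p q (A : 'M[int]_(p, q)) := map_mx (fun x => x ^+ 2) A.

(* For a ternary matrix, the 0/1 indicator of its zero entries. *)
Definition zpat_mx p q (A : 'M[int]_(p, q)) := map_mx (fun x => 1 - x ^+ 2) A.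

Section Patterns.
Variables p q : nat.
Implicit Types A B : 'M[int]_(p, q).

Lemma zpat_tr A : zpat_mx A^T = (zpat_mx A)^T.
Proof. by apply/matrixP => i j; rewrite !mxE. Qed.

Lemma zpat_cogramE A : (zpat_mx A)^T *m zpat_mx A = zpat_mx A^T *m (zpat_mx A^T)^T.
Proof. by rewrite zpat_tr trmxK. Qed.

Lemma sqr_mxE A i j : sqr_mx A i j = 1 - zpat_mx A i j.
Proof. by rewrite !mxE opprB addrC subrK. Qed.

Lemma zpat_ge0 A i j : ternary_mx A -> 0 <= zpat_mx A i j.
Proof. by move=> tA; rewrite mxE; case: (tA i j) => [|[]] ->. Qed.

Lemma zpat_sqr A i j : ternary_mx A -> zpat_mx A i j ^+ 2 = zpat_mx A i j.
Proof. by move=> tA; rewrite mxE; case: (tA i j) => [|[]] ->. Qed.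

Lemma zpat_mul_tr_ge0 A B r s :
  ternary_mx A -> ternary_mx B -> 0 <= (zpat_mx A *m (zpat_mx B)^T) r s.
Proof.
move=> tA tB; rewrite mxE; apply: sumr_ge0 => j _.
by rewrite [_^T _ _]mxE mulr_ge0 ?zpat_ge0.
Qed.

Lemma dvdz2_sqr_mul_tr A B r s :
  (2 %| (sqr_mx A *m (sqr_mx B)^T) r s - (A *m B^T) r s)%Z.
Proof.
rewrite !mxE -sumrB; apply: rpred_sum => j _; rewrite !mxE -exprMn.
exact: dvdz2_sqr_sub.
Qed.

End Patterns.

Section ZeroPatternGram.
Variables n k : nat.
Implicit Types A B C W X Y : 'M[int]_n.

Lemma weighing_row_sqr W i : weighing k W -> \sum_j W i j ^+ 2 = k%:R.
Proof.
case=> _ /matrixP /(_ i i); rewrite !mxE eqxx mulr1n => <-.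
by apply: eq_bigr => j _; rewrite mxE expr2.
Qed.

Lemma zpat_row_sum W i : weighing k W -> \sum_j zpat_mx W i j = n%:R - k%:R.
Proof.
move=> wW; rewrite -(weighing_row_sqr i wW) -[in n%:R](card_ord n) -sumr_const -sumrB.
by apply: eq_bigr => j _; rewrite mxE.
Qed.

Lemma zpat_mul_trE A B r s : weighing k A -> weighing k B ->
  (zpat_mx A *m (zpat_mx B)^T) r s = n%:R - 2 * k%:R + (sqr_mx A *m (sqr_mx B)^T) r s.
Proof.
move=> wA wB; have -> : 2 * k%:R = \sum_j A r j ^+ 2 + \sum_j B s j ^+ 2.
  by rewrite (weighing_row_sqr r wA) (weighing_row_sqr s wB) mulr2n mulrDl mul1r.
rewrite -[in n%:R](card_ord n) -sumr_const !mxE opprD addrA -!sumrB -big_split /=.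
by apply: eq_bigr => j _; rewrite !mxE; ring.
Qed.

Lemma zpat_gram_diag W i : weighing k W -> (zpat_mx W *m (zpat_mx W)^T) i i = n%:R - k%:R.
Proof.
move=> wW; rewrite -(zpat_row_sum i wW) mxE; apply: eq_bigr => j _.
by rewrite [_^T _ _]mxE -expr2 zpat_sqr //; case: wW.
Qed.

Lemma dvdz2_zpat_gram W i j : weighing k W -> i != j ->
  (2 %| (zpat_mx W *m (zpat_mx W)^T) i j - n%:R)%Z.
Proof.
move=> wW ij; have := dvdz2_sqr_mul_tr W W i j.
rewrite zpat_mul_trE // wW.2 [_%:M _ _]mxE (negPf ij) mulr0n subr0; lia.
Qed.

Hypothesis k_gt0 : (0 < k)%N.

Lemma zpat_col_sum W j : weighing k W -> \sum_i zpat_mx W i j = n%:R - k%:R.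
Proof.
move=> wW; rewrite -(zpat_row_sum j (weighing_tr k_gt0 wW)).
by apply: eq_bigr => i _; rewrite !mxE.
Qed.

Lemma zpat_mul_tr_row_sum A B r : weighing k A -> weighing k B ->
  \sum_s (zpat_mx A *m (zpat_mx B)^T) r s = (n%:R - k%:R) ^+ 2.
Proof.
move=> wA wB; under eq_bigr do rewrite mxE.
rewrite exchange_big /= expr2 -{1}(zpat_row_sum r wA) mulr_suml.
apply: eq_bigr => j _; rewrite -(zpat_col_sum j wB) mulr_sumr.
by apply: eq_bigr => s _; rewrite [_^T _ _]mxE.
Qed.

Lemma weighing_odd_order W : odd n -> weighing k W ->
  (n.-1)%:R <= (n%:R - k%:R) ^+ 2 :> int.
Proof.
move=> n_odd wW; have n_gt0 : (0 < n)%N by lia.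
pose r := Ordinal n_gt0; rewrite -(zpat_mul_tr_row_sum r wW wW) (bigD1 r) //=.
apply: ler_wpDl; first by apply: zpat_mul_tr_ge0; case: wW.
rewrite -[n in n.-1](card_ord n) -(cardC1 r) -sumr_const.
have odd_ge1 (g : int) : 0 <= g -> (2 %| g - n%:R)%Z -> 1 <= g by lia.
apply: ler_sum => s; rewrite inE eq_sym => rs.
exact: odd_ge1 (zpat_mul_tr_ge0 r s wW.1 wW.1) (dvdz2_zpat_gram wW rs).
Qed.

(* Since [m] is odd, [(zpat_mx X *m (zpat_mx Y)^T) r s] has the parity of
   [m * C r s], hence of [C r s]. *)
Lemma unbiased_zpat_mul_tr_lower (m : nat) X Y C r s :
  ~~ odd n -> odd m -> weighing k X -> weighing k Y -> ternary_mx C ->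
  X *m Y^T = m%:R *: C -> C r s ^+ 2 <= (zpat_mx X *m (zpat_mx Y)^T) r s.
Proof.
move=> n_even m_odd wX wY tC XY.
apply: ternary_sqr_le_dvdz2 (tC r s) (zpat_mul_tr_ge0 r s wX.1 wY.1) _.
rewrite zpat_mul_trE //; set S := (sqr_mx X *m _) r s.
have -> : n%:R - 2 * k%:R + S - C r s =
          n%:R - 2 * k%:R + (S - (X *m Y^T) r s) + (m%:R - 1) * C r s.
  by rewrite XY mxE; ring.
have n2k_even : (2 %| n%:R - 2 * k%:R)%Z by lia.
have m1_even : (2 %| m%:R - 1)%Z by lia.
exact: rpredD (rpredD n2k_even (dvdz2_sqr_mul_tr X Y r s)) (dvdz_mulr _ m1_even).
Qed.

Section EvenOrder.
Variables (m : nat) (X Y C : 'M[int]_n).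
Hypotheses (n_gt0 : (0 < n)%N) (n_even : ~~ odd n) (m_odd : odd m).
Hypotheses (wX : weighing k X) (wY : weighing k Y) (wC : weighing k C).
Hypothesis XY : X *m Y^T = m%:R *: C.

Lemma unbiased_even_order : k%:R <= (n%:R - k%:R) ^+ 2 :> int.
Proof.
pose r := Ordinal n_gt0.
rewrite -(zpat_mul_tr_row_sum r wX wY) -(weighing_row_sqr r wC).
by apply: ler_sum => s _; exact: unbiased_zpat_mul_tr_lower n_even m_odd wX wY wC.1 XY.
Qed.

Lemma unbiased_even_order_eq : k%:R = (n%:R - k%:R) ^+ 2 :> int ->
  zpat_mx X *m (zpat_mx Y)^T = sqr_mx C.
Proof.
move=> k_eq; apply/matrixP => r s; apply/eqP; rewrite -subr_eq0; apply/eqP.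
have lower s' : sqr_mx C r s' <= (zpat_mx X *m (zpat_mx Y)^T) r s'.
  by rewrite [sqr_mx C _ _]mxE; apply: unbiased_zpat_mul_tr_lower n_even m_odd wX wY wC.1 XY.
move: s isT; apply: psumr_eq0P => [s _|]; first by rewrite subr_ge0.
rewrite sumrB (zpat_mul_tr_row_sum r wX wY) -k_eq -(weighing_row_sqr r wC).
by apply/eqP; rewrite subr_eq0; apply/eqP/eq_bigr => s _; rewrite mxE.
Qed.

End EvenOrder.

End ZeroPatternGram.

Lemma unbiased_mulmx_swap n (m : nat) (X Y C : 'M[int]_n) : (0 < m)%N ->
  weighing (m ^ 2) Y -> X *m Y^T = m%:R *: C -> C *m Y = m%:R *: X.
Proof.
move=> m_gt0 wY XY; have m2_gt0 : (0 < m ^ 2)%N by rewrite expn_gt0 m_gt0.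
have [_] := weighing_tr m2_gt0 wY; rewrite trmxK => YtY.
apply: (@scalemx_inj _ _ _ m%:R); first by rewrite pnatr_eq0 -lt0n.
by rewrite scalemxAl -XY -mulmxA YtY mul_mx_scalar scalerA natrX expr2.
Qed.

Lemma sum_lt_exists (R : realDomainType) (I : finType) (P : pred I) (h : I -> R) c :
  \sum_(i | P i) h i < \sum_(i | P i) c -> exists2 i, P i & h i < c.
Proof.
have [i /andP[Pi hi] | none] := pickP (fun i => P i && (h i < c)); first by exists i.
rewrite ltNge ler_sum // => i Pi; have := none i; rewrite Pi /= => /negbT.
by rewrite -leNgt.
Qed.

Lemma not_dvdz4_mul_pred (t : nat) : (t %% 4 = 3)%N -> ~~ (4 %| t%:R * (t%:R - 1))%Z.
Proof.
move=> t_mod4; have [q ->] : exists q, t = (4 * q + 3)%N by exists (t %/ 4)%N; lia.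
have -> : (4 * q + 3)%N%:R * ((4 * q + 3)%N%:R - 1) = 4 * (4 * q%:R ^+ 2 + 5 * q%:R + 1) + 2 :> int.
  by rewrite natrD natrM; ring.
move: (_ + 1) => d; lia.
Qed.

Section TightOrder.
Variables (t : nat) (X Y C : 'M[int]_(t ^ 2 + t)).
Hypotheses (t_mod4 : (t %% 4 = 3)%N) (XY : X *m Y^T = t%:R *: C).
Hypotheses (wX : weighing (t ^ 2) X) (wY : weighing (t ^ 2) Y) (wC : weighing (t ^ 2) C).
Local Notation n := (t ^ 2 + t)%N.

Let t_gt0 : (0 < t)%N. Proof. lia. Qed.
Let k_gt0 : (0 < t ^ 2)%N. Proof. by rewrite expn_gt0 t_gt0. Qed.
Let n_gt0 : (0 < n)%N. Proof. by rewrite addn_gt0 k_gt0. Qed.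
Let t_odd : odd t. Proof. lia. Qed.
Let n_even : ~~ odd n. Proof. by rewrite oddD oddX addbb. Qed.
Let order_sub : n%:R - (t ^ 2)%N%:R = t%:R :> int. Proof. by rewrite natrD addrAC subrr add0r. Qed.
Let tight : (t ^ 2)%N%:R = (n%:R - (t ^ 2)%N%:R) ^+ 2 :> int. Proof. by rewrite order_sub natrX. Qed.

Let F := (zpat_mx X)^T *m zpat_mx X.
Let G := (zpat_mx Y)^T *m zpat_mx Y.

Let zpat_XY : zpat_mx X *m (zpat_mx Y)^T = sqr_mx C.
Proof. have := unbiased_even_order_eq k_gt0 n_even t_odd wX wY wC XY; apply; exact: tight. Qed.

Let zpat_CY : zpat_mx C *m zpat_mx Y = sqr_mx X.
Proof.
have CY : C *m Y^T^T = t%:R *: X.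
  by rewrite trmxK; exact: unbiased_mulmx_swap t_gt0 wY XY.
have := unbiased_even_order_eq k_gt0 n_even t_odd wC (weighing_tr k_gt0 wY) wX CY.
by rewrite zpat_tr trmxK; apply; exact: tight.
Qed.

Lemma zpat_cogram_mul i j : (F *m G) i j = t%:R * (t%:R - 1) + F i j.
Proof.
have SCY r c : (sqr_mx C *m zpat_mx Y) r c = t%:R - 1 + zpat_mx X r c.
  rewrite mxE; under eq_bigr do rewrite sqr_mxE mulrBl mul1r.
  rewrite sumrB (zpat_col_sum k_gt0 c wY) order_sub.
  have -> : \sum_l zpat_mx C r l * zpat_mx Y l c = (zpat_mx C *m zpat_mx Y) r c by rewrite mxE.
  by rewrite zpat_CY sqr_mxE; ring.
rewrite /F /G !mulmxA -(mulmxA (zpat_mx X)^T) zpat_XY -mulmxA mxE.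
under eq_bigr do rewrite SCY mulrDr.
rewrite big_split /= -mulr_suml; congr (_ * _ + _).
- by rewrite -order_sub -(zpat_col_sum k_gt0 i wX); apply: eq_bigr => r _; rewrite mxE.
- by rewrite mxE.
Qed.

Lemma zpat_cogram_facts (W : 'M[int]_n) : weighing (t ^ 2) W ->
  let H := (zpat_mx W)^T *m zpat_mx W in
  [/\ forall i, H i i = t%:R, forall i j, i != j -> (2 %| H i j)%Z,
      forall i j, 0 <= H i j & forall i, \sum_j H i j = t%:R ^+ 2].
Proof.
move=> wW H; have wWt := weighing_tr k_gt0 wW; rewrite /H zpat_cogramE.
have n2 : (2 %| n%:R)%Z by rewrite natz dvdzE dvdn2.
split=> [i | i j ij | i j | i].
- by rewrite (zpat_gram_diag i wWt) order_sub.
- by have := rpredD (dvdz2_zpat_gram wWt ij) n2; rewrite subrK.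
- by apply: zpat_mul_tr_ge0; case: wWt.
- by rewrite (zpat_mul_tr_row_sum k_gt0 i wWt wWt) order_sub.
Qed.

Lemma tight_order_contradiction : False.
Proof.
have [Fd Fe F0 Fs] := zpat_cogram_facts wX; rewrite -/F in Fd Fe F0 Fs.
have [Gd Ge G0 Gs] := zpat_cogram_facts wY; rewrite -/G in Gd Ge G0 Gs.
pose i0 := Ordinal n_gt0.
have [j ji0 FGj] : exists2 j, j != i0 & F i0 j + G i0 j < 2.
  apply: (@sum_lt_exists _ _ (predC1 i0)).
  have sF : \sum_(j | j != i0) F i0 j = t%:R ^+ 2 - t%:R.
    by have := Fs i0; rewrite (bigD1 i0) //= Fd => <-; rewrite [t%:R + _]addrC addrK.
  have sG : \sum_(j | j != i0) G i0 j = t%:R ^+ 2 - t%:R.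
    by have := Gs i0; rewrite (bigD1 i0) //= Gd => <-; rewrite [t%:R + _]addrC addrK.
  rewrite big_split /= sF sG sumr_const cardC1 card_ord -subn1 -natrX.
  move: (t ^ 2)%N => u; lia.
have [Fj Gj] : F i0 j = 0 /\ G i0 j = 0.
  have even_small (a b : int) : 0 <= a -> 0 <= b -> (2 %| a)%Z -> (2 %| b)%Z ->
    a + b < 2 -> a = 0 /\ b = 0 by lia.
  by rewrite eq_sym in ji0; apply: even_small (Fe _ _ ji0) (Ge _ _ ji0) FGj.
have : (4 %| (F *m G) i0 j)%Z.
  rewrite mxE; apply: rpred_sum => l _.
  have [-> | li0] := eqVneq l i0; first by rewrite Gj mulr0.
  have [-> | lj] := eqVneq l j; first by rewrite Fj mul0r.
  by rewrite eq_sym in li0; apply: (@dvdz_mul 2 2); [apply: Fe | apply: Ge].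
by rewrite zpat_cogram_mul Fj addr0; apply/negP/not_dvdz4_mul_pred.
Qed.
End TightOrder.

Theorem not_unbiased_tight_order (t : nat) (W1 W2 : 'M[int]_(t ^ 2 + t)) :
  (t %% 4 = 3)%N -> ~ unbiased (t ^ 2) W1 W2.
Proof.
move=> t_mod4; have t_gt0 : (0 < t)%N by lia.
case/(unbiasedP W1 W2 t_gt0) => w1 w2 [C wC XY].
exact: tight_order_contradiction t_mod4 XY w1 w2 wC.
Qed.

Lemma weighing_order_ge n k (W : 'M[int]_n) : (0 < n)%N -> weighing k W -> (k <= n)%N.
Proof.
move=> n_gt0 wW; rewrite -(ler_nat int) -subr_ge0 -(zpat_row_sum (Ordinal n_gt0) wW).
by apply: sumr_ge0 => j _; apply: zpat_ge0; case: wW.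
Qed.

Lemma unbiased9_order_ge13 n (W1 W2 : 'M[int]_n) : (0 < n)%N -> unbiased 9 W1 W2 -> (13 <= n)%N.
Proof.
move=> n_gt0 unb; have [w1 w2 [C wC XY]] := (unbiasedP W1 W2 (isT : (0 < 3)%N)).1 unb.
have k_gt0 : (0 < 3 ^ 2)%N by [].
rewrite leqNgt; apply/negP => n_lt13; have n_ge9 := weighing_order_ge n_gt0 w1.
have : (n = 9 \/ n = 10 \/ n = 11 \/ n = 12)%N by lia.
case=> [|[|[]]] n_eq; subst n.
- by have := weighing_odd_order k_gt0 (isT : odd 9) w1.
- by have := unbiased_even_order k_gt0 n_gt0 (isT : ~~ odd 10) (isT : odd 3) w1 w2 wC XY.
- by have := weighing_odd_order k_gt0 (isT : odd 11) w1.
- exact: (@not_unbiased_tight_order 3 W1 W2 erefl unb).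
Qed.

Definition circulant_entry n (s : seq int) (i j : nat) : int := s`_((j + n - i) %% n).
Definition circulant n (s : seq int) : 'M[int]_n := \matrix_(i, j) circulant_entry n s i j.

Lemma circulant_mul_trmx n (s s' : seq int) (h : nat -> nat -> int) :
  all (fun i => all (fun j => foldr (fun l acc =>
         circulant_entry n s i l * circulant_entry n s' j l + acc) 0 (iota 0 n) == h i j)
      (iota 0 n)) (iota 0 n) ->
  circulant n s *m (circulant n s')^T = \matrix_(i < n, j < n) h i j.
Proof.
move=> /allP fgh; apply/matrixP => i j; rewrite !mxE.
have iota_ord (l : 'I_n) : (l : nat) \in iota 0 n by rewrite mem_iota ltn_ord.
move: fgh => /(_ i (iota_ord i)) /allP /(_ j (iota_ord j)) /eqP <-.
under eq_bigr do rewrite !mxE.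
rewrite -(big_mkord xpredT (fun l => circulant_entry n s i l * circulant_entry n s' j l)).
rewrite /index_iota subn0.
by elim: (iota 0 n) => [|l ls IH]; rewrite ?big_nil ?big_cons ?IH.
Qed.

Lemma circulant_ternary n s : all (mem [:: 0; 1; -1]) s -> ternary_mx (circulant n s).
Proof.
move=> /allP s3 i j; rewrite mxE /circulant_entry.
have [lt | ge] := ltnP ((j + n - i) %% n) (size s); last by rewrite nth_default //; left.
by have := s3 _ (mem_nth 0 lt); rewrite !inE => /or3P[] /eqP ->; auto.
Qed.

Lemma scalar_mx_nat n (a : int) : a%:M = \matrix_(i < n, j < n) (a *+ (i == j :> nat)).
Proof. by apply/matrixP => i j; rewrite !mxE. Qed.

Lemma unbiased9_order13 : exists W1 W2 : 'M[int]_13, unbiased 9 W1 W2.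
Proof.
pose a : seq int := [:: 0; 0; 1; 0; 1; 1; 1; -1; -1; 0; 1; -1; 1].
pose b : seq int := [:: 0; 0; 1; 1; 0; 1; 0; 1; -1; 1; 1; -1; -1].
pose c : seq int := [:: 1; 0; 0; 1; -1; 0; -1; 0; 1; 1; 1; -1; 1].
have weighing9 s : all (mem [:: 0; 1; -1]) s ->
    circulant 13 s *m (circulant 13 s)^T = (3 ^ 2)%:R%:M -> weighing (3 ^ 2) (circulant 13 s).
  by split; first exact: circulant_ternary.
exists (circulant 13 a), (circulant 13 b).
apply/(unbiasedP _ _ (isT : (0 < 3)%N)); split; last exists (circulant 13 c).
1-3: apply: weighing9 => //.
1-3: rewrite scalar_mx_nat.
1-3: by apply: (circulant_mul_trmx (h := fun i j => (3 ^ 2)%:R *+ (i == j))); vm_compute.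
have -> : 3%:R *: circulant 13 c = \matrix_(i < 13, j < 13) (3 * circulant_entry 13 c i j).
  by apply/matrixP => i j; rewrite !mxE.
by apply: (circulant_mul_trmx (h := fun i j => 3 * circulant_entry 13 c i j)); vm_compute.
Qed.

Theorem corollary6p3 :
  (exists W1 W2 : 'M[int]_13, unbiased 9 W1 W2) /\
  (forall n : nat, (0 < n < 13)%N ->
     ~ exists W1 W2 : 'M[int]_n, unbiased 9 W1 W2).
Proof.
split=> [|n /andP[n_gt0 n_lt13] [W1 [W2 unb]]]; first exact: unbiased9_order13.
by have := unbiased9_order_ge13 n_gt0 unb; rewrite leqNgt n_lt13.
Qed.
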